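(* Let $n$ be even and $F\colon\mathbb F_2^n\to\mathbb F_2^n$ a quadratic APN function with linearity $L(F)=2^{\frac{n+l}{2}}$ where $l>n/2$. Then $F$ has exactly one component function with amplitude $2^{\frac{n+l}{2}}$, and all other non-trivial components have amplitude at most $2^{\frac{2n-l}{2}}$. In particular, any quadratic APN function $F\colon\mathbb F_2^n\to\mathbb F_2^n$ ($n$ even) has at most one component function with amplitude larger than $2^{3n/4}$.
   Context: $\langle\cdot,\cdot\rangle$ is the standard dot product. $F$ is APN if for every $a\ne0$ and $c$, $F(x)+F(x+a)=c$ has at most 2 solutions; quadratic if each component $F_b(x)=\langle b,F(x)\rangle$ is a quadratic form plus an affine function; $F_0$ is the trivial component. $W_F(b,a)=\sum_x(-1)^{F_b(x)+\langle x,a\rangle}$; linearity $L(F)=\max_{a,\,b\ne0}|W_F(b,a)|$. For quadratic $F$ and fixed $b$ there is $k$ with $|W_F(b,a)|\in\{0,2^{(n+k)/2}\}$ for all $a$; $2^{(n+k)/2}$ is the amplitude of $F_b$. *)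

From HB Require Import structures.
From mathcomp Require Import all_boot all_order all_algebra.
Set Implicit Arguments. Unset Strict Implicit. Unset Printing Implicit Defensive.
Import Order.TTheory GRing.Theory Num.Theory.
Local Open Scope ring_scope.

Notation vec n := 'rV['F_2]_n.

Definition dot n (u v : vec n) : 'F_2 := \sum_(i < n) u 0 i * v 0 i.

Definition component n (F : vec n -> vec n) (b : vec n) (x : vec n) : 'F_2 :=
  dot b (F x).

Definition APN n (F : vec n -> vec n) : Prop :=
  forall a c : vec n, a != 0 -> (#|[set x : vec n | (F x + F (x + a) == c)%R]| <= 2)%N.

Definition quad_form n (Q : 'M['F_2]_n) (x : vec n) : 'F_2 := (x *m Q *m x^T) 0 0.

Definition quadratic n (F : vec n -> vec n) : Prop :=
  forall b : vec n, exists (Q : 'M['F_2]_n) (c : vec n) (d : 'F_2),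
    forall x, component F b x = quad_form Q x + dot x c + d.

Definition sgnF2 (e : 'F_2) : int := if e == 0 then 1 else -1.

Definition walsh n (F : vec n -> vec n) (b a : vec n) : int :=
  \sum_(x : vec n) sgnF2 (component F b x + dot x a).

Definition linearity n (F : vec n -> vec n) : nat :=
  \max_(b : vec n | b != 0) \max_(a : vec n) `|walsh F b a|%N.

(* amplitude of F_b: the (common) nonzero value of |W_F(b,a)|, i.e. the max over a *)
Definition amplitude n (F : vec n -> vec n) (b : vec n) : nat :=
  \max_(a : vec n) `|walsh F b a|%N.

(* For quadratic F the polar form B_b(x,z) = F_b(x+z) + F_b(x) + F_b(z) + F_b(0) of each
   component is bilinear, and squaring the Walsh sum shows W_F(b,a)^2 is 0 or 2^n |V_b|,
   where V_b is the radical of B_b; by Parseval the squared amplitude of F_b is 2^n |V_b|.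
   Counting the pairs (c, x) with <c, F(x+z) + F(x) + F(z) + F(0)> = 0 in two ways, the
   number of c with z in V_c equals the number of solutions of F(x) + F(x+z) = F(z) + F(0),
   which is at most 2 by APN.  Hence the radicals of two distinct non-trivial components
   meet only in 0, so |V_b| |V_b'| <= 2^n, and the product of their squared amplitudes is
   at most 2^(3n).  Both claims follow from this inequality. *)

From mathcomp Require Import all_boot all_order all_algebra ring zify.
Set Implicit Arguments. Unset Strict Implicit. Unset Printing Implicit Defensive.
Import GRing.Theory.
Local Open Scope ring_scope.

Lemma F2_cases (u : 'F_2) : u = 0 \/ u = 1.
Proof. by case: u => [[|[|m]] //] lt_u2; [left | right]; apply: val_inj. Qed.

Lemma F2_2 : 2 = 0 :> 'F_2. Proof. by apply/eqP. Qed.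
Lemma F2_3 : 3 = 1 :> 'F_2. Proof. by apply/eqP. Qed.
Lemma F2_4 : 4 = 0 :> 'F_2. Proof. by apply/eqP. Qed.

(* [ring] keeps integer coefficients, so each one that occurs must be reduced mod 2. *)
Ltac ring_F2 := ring: F2_2 F2_3 F2_4.

Lemma sgnF2D (u v : 'F_2) : sgnF2 (u + v) = sgnF2 u * sgnF2 v.
Proof. by case: (F2_cases u) => ->; case: (F2_cases v) => ->. Qed.

Lemma addrr_F2 (u : 'F_2) : u + u = 0.
Proof. by rewrite addrr_pchar2 // pchar_Fp. Qed.

Lemma oppv n (v : vec n) : - v = v.
Proof. by apply/rowP => i; rewrite mxE oppr_pchar2 // pchar_Fp. Qed.

Lemma card_vec n : #|{: vec n}| = (2 ^ n)%N.
Proof. by rewrite card_mx card_Fp // mul1n. Qed.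

Section DotProduct.
Variable n : nat.
Implicit Types u v w : vec n.

Lemma dotC u v : dot u v = dot v u.
Proof. by apply: eq_bigr => i _; rewrite mulrC. Qed.

Lemma dotDl u v w : dot (u + v) w = dot u w + dot v w.
Proof. by rewrite /dot -big_split; apply: eq_bigr => i _; rewrite mxE mulrDl. Qed.

Lemma dotDr u v w : dot u (v + w) = dot u v + dot u w.
Proof. by rewrite dotC dotDl !(dotC u). Qed.

Lemma dot0l v : dot 0 v = 0.
Proof. by rewrite /dot big1 // => i _; rewrite mxE mul0r. Qed.

Lemma dot_deltal v (i : 'I_n) : dot (delta_mx 0 i) v = v 0 i.
Proof.
rewrite /dot (bigD1 i) //= mxE !eqxx mul1r big1 ?addr0 // => j /negbTE ne_ji.
by rewrite mxE ne_ji andbF mul0r.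
Qed.

End DotProduct.

Section CharacterSums.
Variable n : nat.
Implicit Types (A : {pred vec n}) (phi : vec n -> 'F_2).

Lemma sum_sgnF2_additive_on A phi :
    {in A &, forall x y, x + y \in A} -> {in A &, {morph phi : x y / x + y}} ->
  \sum_(x in A) sgnF2 (phi x) = if [forall x in A, phi x == 0] then #|A|%:Z else 0.
Proof.
move=> addA phiD; case: ifPn => [/forall_inP phi0 | /forall_inPn [x0 Ax0 phix0]].
  by rewrite (eq_bigr (fun=> 1)) ?sumr_const ?natz // => x /phi0/eqP ->.
have {}phix0 : phi x0 = 1 by case: (F2_cases (phi x0)) phix0 => ->.
have shiftA x : (x + x0 \in A) = (x \in A).
  apply/idP/idP => [Ax0' | Ax]; last exact: addA.
  by rewrite -(addrK x0 x) oppv addA.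
set S := (\sum_(x in A) _); suff : S = - S by lia.
rewrite {1}/S (reindex_inj (addIr x0)) /= -sumrN (eq_bigl _ _ shiftA).
by apply: eq_bigr => x Ax; rewrite phiD // phix0 sgnF2D mulrN1.
Qed.

Lemma sum_sgnF2_additive phi : {morph phi : x y / x + y} ->
  \sum_x sgnF2 (phi x) = if [forall x, phi x == 0] then #|{: vec n}|%:Z else 0.
Proof. by move=> phiD; rewrite -(@sum_sgnF2_additive_on predT) // => x y _ _. Qed.

Lemma sum_sgnF2_dot (v : vec n) :
  \sum_u sgnF2 (dot u v) = if v == 0 then #|{: vec n}|%:Z else 0.
Proof.
rewrite sum_sgnF2_additive; last by move=> x y; exact: dotDl.
congr (if _ then _ else _); apply/forallP/eqP => [v0 | -> u]; last by rewrite dotC dot0l.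
by apply/rowP => i; rewrite mxE -dot_deltal; apply/eqP.
Qed.

End CharacterSums.

Lemma TI_card_mul_le n (A B : {set vec n}) :
    {in A &, forall u v, u + v \in A} -> {in B &, forall u v, u + v \in B} ->
    A :&: B \subset [set 0] ->
  (#|A| * #|B| <= #|{: vec n}|)%N.
Proof.
move=> addA addB meetAB; rewrite -cardsX.
suff /card_in_imset <- : {in setX A B &, injective (fun p => p.1 + p.2)} by exact: max_card.
move=> [u v] [u' v']; rewrite !in_setX /= => /andP [Au Bv] /andP [Au' Bv'] eq_sum.
have eq_diff : u - u' = v' - v by rewrite -(addrK v u) eq_sum addrAC [u' + v']addrC addrK.
have /(subsetP meetAB) : u - u' \in A :&: B.
  by rewrite inE {2}eq_diff !oppv addA // addB.
rewrite inE subr_eq0 => /eqP eq_u; move/eqP: eq_diff.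
by rewrite eq_u subrr eq_sym subr_eq0 => /eqP ->.
Qed.

Section Walsh.
Variables (n : nat) (F : vec n -> vec n).
Implicit Types (a b c x y z : vec n).

Local Notation N := #|{: vec n}|.

Lemma card_vec_gt0 : (0 < N)%N.
Proof. by apply/card_gt0P; exists 0. Qed.

Lemma sum_walsh_sqr b : \sum_a walsh F b a ^+ 2 = (N ^ 2)%N%:Z.
Proof.
transitivity (\sum_x \sum_y sgnF2 (component F b x + component F b y) *
                            \sum_a sgnF2 (dot a (x + y))).
  rewrite (eq_bigr _ (fun a _ => expr2 _)) /walsh.
  under eq_bigr do rewrite mulr_suml; rewrite exchange_big; apply: eq_bigr => x _.
  under eq_bigr do rewrite mulr_sumr; rewrite exchange_big; apply: eq_bigr => y _.
  rewrite mulr_sumr; apply: eq_bigr => a _.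
  by rewrite -!sgnF2D dotDr !(dotC a); congr sgnF2; ring_F2.
have -> : ((N ^ 2)%N)%:Z = \sum_(x : vec n) N%:Z :> int.
  by rewrite sumr_const -mulr_natr natz -PoszM mulnn.
apply: eq_bigr => x _; under eq_bigr do rewrite sum_sgnF2_dot addr_eq0 oppv.
rewrite (bigD1 x) //= eqxx addrr_F2 mul1r big1 ?addr0 // => y /negbTE ne_yx.
by rewrite eq_sym ne_yx mulr0.
Qed.

Lemma linearity_attained : (0 < linearity F)%N ->
  exists2 b0, b0 != 0 & linearity F = amplitude F b0.
Proof.
have [none | some] := posnP #|[pred b : vec n | b != 0]|.
  by rewrite /linearity big_pred0 // => b; apply: (card0_eq none).
by have [b0 nz_b0 max_b0] := eq_bigmax_cond (amplitude F) some; exists b0.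
Qed.

Definition polar b x z : 'F_2 :=
  component F b (x + z) + component F b x + component F b z + component F b 0.

Definition radical b : {set vec n} := [set z | [forall x, polar b x z == 0]].

Lemma polarC b x z : polar b x z = polar b z x.
Proof. rewrite /polar [x + z]addrC; ring. Qed.

Lemma polarE c x z : polar c x z = dot c (F (x + z) + F x + F z + F 0).
Proof. by rewrite /polar /component !dotDr. Qed.

Lemma mem_radical0 b : 0 \in radical b.
Proof.
by rewrite inE; apply/forallP => x; rewrite /polar addr0 addrr_F2 add0r addrr_F2.
Qed.

Section Quadratic.
Hypothesis F_quadratic : quadratic F.

Lemma polar_bilinear b : exists Q : 'M_n, forall x z, polar b x z = dot (x *m Q) z.
Proof.
have [Q [c [d Fb]]] := F_quadratic b; exists (Q + Q^T) => x z.
have swap : z *m Q *m x^T = x *m Q^T *m z^T.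
  apply/matrixP => i j; rewrite -[in RHS](trmxK x) -!trmx_mul [RHS]mxE mulmxA.
  by rewrite (ord1 i) (ord1 j).
have -> : dot (x *m (Q + Q^T)) z = (x *m (Q + Q^T) *m z^T) 0 0.
  by rewrite [RHS]mxE; apply: eq_bigr => j _; rewrite !mxE.
have entryD (A B : 'M['F_2]_1) : (A + B) 0 0 = A 0 0 + B 0 0 by rewrite mxE.
rewrite /polar !Fb /quad_form !mul0mx [(0 : 'M_1) 0 0]mxE linearD /=.
rewrite !(mulmxDl, mulmxDr) swap !entryD !dotDl dot0l; ring_F2.
Qed.

Lemma polarDl b x y z : polar b (x + y) z = polar b x z + polar b y z.
Proof. by have [Q polarQ] := polar_bilinear b; rewrite !polarQ mulmxDl dotDl. Qed.

Lemma polarDr b x y z : polar b x (y + z) = polar b x y + polar b x z.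
Proof. by rewrite !(polarC b x) polarDl. Qed.

Lemma radical_addr_closed b : {in radical b &, forall y z, y + z \in radical b}.
Proof.
move=> y z; rewrite !inE => /forallP rad_y /forallP rad_z; apply/forallP => x.
by rewrite polarDr (eqP (rad_y x)) (eqP (rad_z x)) addr0.
Qed.

Lemma sum_sgnF2_polar b z :
  \sum_x sgnF2 (polar b x z) = if z \in radical b then N%:Z else 0.
Proof. by rewrite inE sum_sgnF2_additive // => x y; exact: polarDl. Qed.

Lemma walsh_sqr b a : walsh F b a ^+ 2 =
  N%:Z * \sum_(z in radical b) sgnF2 (component F b z + component F b 0 + dot z a).
Proof.
rewrite expr2 /walsh mulr_suml.
transitivity (\sum_x \sum_z sgnF2 (polar b x z) *
                 sgnF2 (component F b z + component F b 0 + dot z a)).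
  apply: eq_bigr => x _; rewrite mulr_sumr (reindex_inj (addrI x)) /=.
  by apply: eq_bigr => z _; rewrite -!sgnF2D /polar dotDl; congr sgnF2; ring_F2.
rewrite exchange_big mulr_sumr [RHS]big_mkcond; apply: eq_bigr => z _ /=.
by rewrite -mulr_suml sum_sgnF2_polar; case: ifP; rewrite ?mul0r // mulrC.
Qed.

Lemma sum_sgnF2_radical b a :
  \sum_(z in radical b) sgnF2 (component F b z + component F b 0 + dot z a) =
  if [forall z in radical b, component F b z + component F b 0 + dot z a == 0]
  then #|radical b|%:Z else 0.
Proof.
apply: sum_sgnF2_additive_on; first exact: radical_addr_closed.
move=> y z _; rewrite inE => /forallP/(_ y)/eqP polar_yz.
by rewrite dotDl -[component F b (y + z)]addr0 -polar_yz /polar; ring_F2.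
Qed.

Lemma walsh_sqr_cases b a :
  (`|walsh F b a| ^ 2 = 0 \/ `|walsh F b a| ^ 2 = N * #|radical b|)%N.
Proof.
rewrite -abszX walsh_sqr sum_sgnF2_radical.
by case: ifP => _; [right; rewrite -PoszM | left; rewrite mulr0].
Qed.

Lemma amplitude_sqr b : (amplitude F b ^ 2 = N * #|radical b|)%N.
Proof.
have [a1 amp_a1] := bigop.eq_bigmax (fun a => `|walsh F b a|%N) card_vec_gt0.
rewrite /amplitude amp_a1; case: (walsh_sqr_cases b a1) => // walsh_a1_0.
have walsh0 a : walsh F b a = 0.
  apply/eqP; rewrite -absz_eq0 -leqn0.
  have := bigop.leq_bigmax (F := fun a => `|walsh F b a|%N) a.
  by rewrite amp_a1; move/eqP: walsh_a1_0; rewrite expn_eq0 => /andP [/eqP ->].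
have := sum_walsh_sqr b; rewrite big1 => [/eqP | a _]; last by rewrite walsh0 expr0n.
by rewrite eq_sym eqz_nat expn_eq0 (gtn_eqF card_vec_gt0).
Qed.

Lemma amplitude_sqr_gt0 b : (0 < amplitude F b ^ 2)%N.
Proof.
rewrite amplitude_sqr muln_gt0 card_vec_gt0 /=.
by apply/card_gt0P; exists 0; exact: mem_radical0.
Qed.

Lemma card_radical_mem z :
  #|[set c | z \in radical c]| = #|[set x | F (x + z) + F x + F z + F 0 == 0]|.
Proof.
have sum_indicator (A : {set vec n}) :
    \sum_v (if v \in A then N%:Z else 0) = (N * #|A|)%N%:Z.
  by rewrite -big_mkcond sumr_const -mulr_natr natz.
apply/eqP; rewrite -(eqn_pmul2l card_vec_gt0) -eqz_nat -!sum_indicator; apply/eqP.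
transitivity (\sum_c \sum_x sgnF2 (dot c (F (x + z) + F x + F z + F 0))).
  apply: eq_bigr => c _; rewrite inE -sum_sgnF2_polar.
  by apply: eq_bigr => x _; rewrite polarE.
by rewrite exchange_big; apply: eq_bigr => x _; rewrite sum_sgnF2_dot inE.
Qed.

Section APN.
Hypothesis F_APN : APN F.

Lemma card_radical_mem_le2 z : z != 0 -> (#|[set c | z \in radical c]| <= 2)%N.
Proof.
move=> nz_z; rewrite card_radical_mem; apply: leq_trans (F_APN (F z + F 0) nz_z).
apply/subset_leq_card/subsetP => x.
by rewrite !inE -addrA addr_eq0 oppv [F (x + z) + _]addrC.
Qed.

Lemma radical_TI b1 b2 :
  b1 != 0 -> b2 != 0 -> b1 != b2 -> radical b1 :&: radical b2 \subset [set 0].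
Proof.
move=> nz_b1 nz_b2 ne_b12; apply/subsetP => z; rewrite !inE => /andP [z_b1 z_b2].
have [// | nz_z] := eqVneq z 0; have := card_radical_mem_le2 nz_z.
rewrite leqNgt => /negbTE <-.
have sub : [set 0; b1; b2] \subset [set c | z \in radical c].
  apply/subsetP => c; rewrite !inE -!orbA => /or3P [] /eqP -> //.
  by apply/forallP => x; rewrite polarE dot0l.
apply: leq_trans (subset_leq_card sub).
by rewrite setUC cardsU1 cards2 !inE negb_or nz_b2 (eq_sym b2) ne_b12 (eq_sym 0) nz_b1.
Qed.

Lemma amplitude_mul_sqr_le b1 b2 : b1 != 0 -> b2 != 0 -> b1 != b2 ->
  ((amplitude F b1 * amplitude F b2) ^ 2 <= 2 ^ (3 * n))%N.
Proof.
move=> nz_b1 nz_b2 ne_b12.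
have le_rad := TI_card_mul_le (@radical_addr_closed b1) (@radical_addr_closed b2)
  (radical_TI nz_b1 nz_b2 ne_b12).
rewrite expnMn !amplitude_sqr mulnACA (mulnC 3) expnM -card_vec !expnS expn0 muln1.
by rewrite [leqRHS]mulnA leq_mul2l le_rad orbT.
Qed.

End APN.
End Quadratic.
End Walsh.

Theorem mainTheorem6 (n : nat) (F : vec n -> vec n) :
  ~~ odd n -> quadratic F -> APN F ->
  (forall l : nat, (linearity F ^ 2 = 2 ^ (n + l))%N -> (n < 2 * l)%N ->
     (exists b0 : vec n,
        [/\ b0 != 0, (amplitude F b0 ^ 2 = 2 ^ (n + l))%N &
            forall b : vec n, b != 0 -> b != b0 ->
              (amplitude F b ^ 2 <= 2 ^ (2 * n - l))%N]))
  /\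
  (forall b1 b2 : vec n, b1 != 0 -> b2 != 0 ->
     (2 ^ (3 * n) < amplitude F b1 ^ 4)%N ->
     (2 ^ (3 * n) < amplitude F b2 ^ 4)%N -> b1 = b2).
Proof.
move=> _ F_quadratic F_APN; split.
- move=> l lin_F _.
  have [b0 nz_b0 lin_b0] : exists2 b0, b0 != 0 & linearity F = amplitude F b0.
    apply: linearity_attained; move: lin_F.
    by case: (linearity F) => // /esym/eqP; rewrite expn_eq0.
  exists b0; split; rewrite -?lin_b0 // => b nz_b ne_bb0.
  have := amplitude_mul_sqr_le F_quadratic F_APN nz_b nz_b0 ne_bb0.
  rewrite expnMn -lin_b0 lin_F => le_3n.
  have le_nl : (n + l <= 3 * n)%N.
    rewrite -(leq_exp2l _ _ (ltnSn 1)); apply: leq_trans le_3n.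
    exact: leq_pmull (amplitude_sqr_gt0 F_quadratic b).
  have pow_gt0 : (0 < 2 ^ (n + l))%N by rewrite expn_gt0.
  by rewrite -(leq_pmul2r pow_gt0) -expnD (_ : 2 * n - l + (n + l) = 3 * n)%N //; lia.
- move=> b1 b2 nz_b1 nz_b2 big_b1 big_b2; apply/eqP/contraT => ne_b12.
  have := amplitude_mul_sqr_le F_quadratic F_APN nz_b1 nz_b2 ne_b12.
  rewrite leqNgt => /negbTE <-.
  rewrite -ltn_sqr -!expnM expnMn muln2 -addnn expnD.
  exact: ltn_mul big_b1 big_b2.
Qed.
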